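(* Let $\mathbb{K}$ be a field of characteristic $p>0$, let $S=\mathbb{K}[x_1,\ldots,x_n]$, and let $f\in S$ be a polynomial whose leading term $\mathrm{lt}_{\prec}(f)$ is a squarefree monomial for some monomial term order $\prec$. If $I\in\mathcal{C}_f$, then the initial ideal $\mathrm{lt}_{\prec}(I)$ is generated by squarefree monomials. (In particular every $I\in\mathcal{C}_f$ is radical.)
   Context: For $f\in S$, $\mathcal{C}_f$ denotes the smallest set of ideals of $S$ such that: (1) $(f)\in\mathcal{C}_f$; (2) if $I\in\mathcal{C}_f$ then $I:J\in\mathcal{C}_f$ for every ideal $J\subseteq S$; (3) if $I,J\in\mathcal{C}_f$ then $I+J\in\mathcal{C}_f$ and $I\cap J\in\mathcal{C}_f$. The initial ideal $\mathrm{lt}_{\prec}(I)$ is the ideal generated by the leading terms (w.r.t. $\prec$) of all elements of $I$. *)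

From mathcomp Require Import all_boot all_algebra.
From mathcomp Require Import mpoly.
Set Implicit Arguments. Unset Strict Implicit. Unset Printing Implicit Defensive.
Import GRing.Theory.
Local Open Scope ring_scope.

Section Ideals.
Variables (n : nat) (K : fieldType).
Local Notation S := {mpoly K[n]}.

Definition is_ideal (I : S -> Prop) : Prop :=
  [/\ I 0,
      (forall a b, I a -> I b -> I (a + b)) &
      (forall r a, I a -> I (r * a))].

Definition ideal_gen (A : S -> Prop) : S -> Prop :=
  fun x => exists s : seq (S * S),
    (forall c, c \in s -> A c.2) /\ x = \sum_(c <- s) c.1 * c.2.

Definition principal (f : S) : S -> Prop := ideal_gen (fun g => g = f).

Definition colon (I J : S -> Prop) : S -> Prop :=
  fun g => forall h, J h -> I (g * h).

Definition ideal_sum (I J : S -> Prop) : S -> Prop :=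
  fun g => exists a b, [/\ I a, J b & g = a + b].

Definition ideal_cap (I J : S -> Prop) : S -> Prop :=
  fun g => I g /\ J g.

(* C_f : the smallest set of ideals containing (f) and closed under colon by
   arbitrary ideals, sums and intersections (sets of ideals are taken up to
   extensional equality of subsets). *)
Inductive Cf (f : S) : (S -> Prop) -> Prop :=
  | Cf_base I : (forall g, I g <-> principal f g) -> Cf f I
  | Cf_colon I J L : Cf f I -> is_ideal J ->
      (forall g, L g <-> colon I J g) -> Cf f L
  | Cf_sum I J L : Cf f I -> Cf f J ->
      (forall g, L g <-> ideal_sum I J g) -> Cf f L
  | Cf_cap I J L : Cf f I -> Cf f J ->
      (forall g, L g <-> ideal_cap I J g) -> Cf f L.

Definition monomial_order (le : rel 'X_{1..n}) : Prop :=
  [/\ reflexive le, antisymmetric le, transitive le & total le] /\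
  (forall a b c, le a b -> le (a + c)%MM (b + c)%MM) /\
  (forall a, le 0%MM a).

Definition is_lead_mon (le : rel 'X_{1..n}) (g : S) (m : 'X_{1..n}) : Prop :=
  m \in msupp g /\ forall m', m' \in msupp g -> le m' m.

Definition squarefree_mon (m : 'X_{1..n}) : Prop := forall i : 'I_n, (m i <= 1)%N.

Definition initial_ideal (le : rel 'X_{1..n}) (I : S -> Prop) : S -> Prop :=
  ideal_gen (fun x => exists g m, [/\ I g, is_lead_mon le g m & x = 'X_[m]]).

Definition gen_by_squarefree_monomials (J : S -> Prop) : Prop :=
  exists G : 'X_{1..n} -> Prop, (forall m, G m -> squarefree_mon m) /\
    forall g, J g <-> ideal_gen (fun x => exists m, G m /\ x = 'X_[m]) g.

End Ideals.

(* Let [cartier] be the Cartier operator of S: it maps x^(p d + (p-1)(1,...,1))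
   to x^d and kills every other monomial, so that
   cartier (a^p g) = mfrob a * cartier g, where [mfrob] raises all coefficients
   to the p-th power.  Put u = f^(p-1) x^((p-1)((1,...,1) - m)); since m is
   squarefree, the leading monomial of u is x^((p-1)(1,...,1)).  Every I in C_f
   satisfies cartier (u I) ⊆ (mfrob I): for (f) because u (f) ⊆ f^p S, and for
   colons, sums and intersections by the same identity and by linear algebra
   of K over its subfield K^p, which also shows that every leading monomial of
   (mfrob I) is one of I.  Hence if g ∈ I has
   leading monomial x^b and c = ⌈b/p⌉, then cartier (u x^(p c - b) g) shows
   that x^c is a leading monomial of I.  Iterating reaches the squarefree
   monomial with the support of b, which divides x^b. *)

From HB Require Import structures.
From mathcomp Require Import all_boot all_algebra.
From mathcomp Require Import mpoly.
From mathcomp Require Import zify ring.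
From Stdlib Require Import Classical.
Set Implicit Arguments. Unset Strict Implicit. Unset Printing Implicit Defensive.
Import GRing.Theory.
Local Open Scope ring_scope.

Lemma pchar_gt0 (R : nzSemiRingType) p : p \in [pchar R] -> (0 < p)%N.
Proof. by move/pcharf_prime/prime_gt0. Qed.

Lemma ceil_div_bounds d x : (1 < d)%N -> let q := ((x + d.-1) %/ d)%N in
  [/\ (x <= q * d)%N, (q <= x)%N, (1 < x -> q < x)%N & minn q 1 = minn x 1].
Proof.
move=> d_gt1 q; have := divn_eq (x + d.-1) d; have := ltn_pmod (x + d.-1) (ltnW d_gt1).
rewrite -/q; move: ((x + d.-1) %% d)%N => r r_lt xE.
by split=> [|||]; nia.
Qed.

Section Multinomials.
Variable n : nat.
Implicit Types (a b : 'X_{1..n}).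

Definition mnm_ones : 'X_{1..n} := [multinom 1%N | i < n].

Definition mnm_rad b : 'X_{1..n} := [multinom minn (b i) 1 | i < n].

Lemma mnm_rad_le b : (mnm_rad b <= b)%MM.
Proof. by apply/mnm_lepP => i; rewrite mnmE geq_minl. Qed.

Lemma mnm_rad_squarefree b : squarefree_mon (mnm_rad b).
Proof. by move=> i; rewrite mnmE geq_minr. Qed.

Lemma lem_mdeg_lt a b i : (a <= b)%MM -> (a i < b i)%N -> (mdeg a < mdeg b)%N.
Proof.
move=> /mnm_lepP ab ai; rewrite !mdegE (bigD1 i) //= [X in (_ < X)%N](bigD1 i) //=.
by rewrite -addSn leq_add // leq_sum.
Qed.

End Multinomials.

Section MpolyCoef.
Variables (n : nat) (R : comNzRingType).
Local Notation S := {mpoly R[n]}.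

Lemma mcoeffM_msupp (g h : S) k : (g * h)@_k =
  \sum_(a <- msupp g) \sum_(b <- msupp h) g@_a * h@_b * ((a + b)%MM == k)%:R.
Proof.
rewrite mpolyME big_allpairs (raddf_sum (mcoeff k)); apply: eq_bigr => a _.
rewrite (raddf_sum (mcoeff k)); apply: eq_bigr => b _.
by rewrite /= mcoeffZ mcoeffX.
Qed.

Lemma mcoeffXM m (q : S) k :
  ('X_[m] * q)@_k = if (m <= k)%MM then q@_(k - m) else 0.
Proof.
rewrite -commr_mpolyX; case: ifP => mk; first by rewrite -{1}(submK mk) addmC mcoeffMX.
rewrite memN_msupp_eq0 // (perm_mem (msuppMX _ _)).
by apply/mapP => -[m' _ km]; move/negP: mk; apply; rewrite km lem_addr.
Qed.

End MpolyCoef.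

Section MonomialOrder.
Variables (n : nat) (K : fieldType) (le : rel 'X_{1..n}).
Hypothesis le_mo : monomial_order le.
Local Notation S := {mpoly K[n]}.

Lemma morder_refl : reflexive le.
Proof. by case: le_mo => -[refl _ _ _] _. Qed.

Lemma morder_anti a b : le a b -> le b a -> a = b.
Proof. by case: le_mo => -[_ anti _ _] _ ab ba; apply: anti; rewrite ab ba. Qed.

Lemma morder_trans : transitive le.
Proof. by case: le_mo => -[_ _ trans _] _. Qed.

Lemma morder_total : total le.
Proof. by case: le_mo => -[_ _ _ tot] _. Qed.

Lemma morder_addr c a b : le a b -> le (a + c)%MM (b + c)%MM.
Proof. by case: le_mo => _ [addr _]; apply: addr. Qed.

Lemma morder_addl c a b : le a b -> le (c + a)%MM (c + b)%MM.
Proof. by rewrite ![(c + _)%MM]addmC; apply: morder_addr. Qed.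

Lemma morder_add a b c d : le a b -> le c d -> le (a + c)%MM (b + d)%MM.
Proof. by move=> ab cd; apply: (morder_trans (morder_addr c ab)); apply: morder_addl. Qed.

Lemma morder_muln k a b : le a b -> le (a *+ k)%MM (b *+ k)%MM.
Proof.
by move=> ab; elim: k => [|k IHk]; rewrite ?mulm0n ?morder_refl // !mulmS morder_add.
Qed.

Lemma mcoeff_lead_neq0 (g : S) a : is_lead_mon le g a -> g@_a != 0.
Proof. by case; rewrite mcoeff_msupp. Qed.

Lemma mcoeffM_lead (g h : S) a b : is_lead_mon le g a -> is_lead_mon le h b ->
  (g * h)@_(a + b) = g@_a * h@_b.
Proof.
move=> [ga g_le] [hb h_le].
rewrite mcoeffM_msupp (bigD1_seq a) ?msupp_uniq //= (bigD1_seq b) ?msupp_uniq //=.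
rewrite eqxx mulr1 big1 ?addr0 => [|b' b'b]; last first.
  case: eqP => [/addmI b'E|]; last by rewrite mulr0.
  by rewrite b'E eqxx in b'b.
rewrite big_seq_cond big1 ?addr0 // => a' /andP[a'g a'a].
rewrite big_seq big1 // => b' b'h; case: eqP => [abE|]; last by rewrite mulr0.
have a'b'_le : le (a' + b')%MM (a + b')%MM by apply/morder_addr/g_le.
have ab'_le : le (a + b')%MM (a' + b')%MM by rewrite abE; apply/morder_addl/h_le.
by move: (morder_anti a'b'_le ab'_le) => /addIm a'E; rewrite a'E eqxx in a'a.
Qed.

Lemma is_lead_monM (g h : S) a b : is_lead_mon le g a -> is_lead_mon le h b ->
  is_lead_mon le (g * h) (a + b)%MM.
Proof.
move=> ga hb; split.
  by rewrite mcoeff_msupp (mcoeffM_lead ga hb) mulf_neq0 ?mcoeff_lead_neq0.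
move=> c /msuppM_le /allpairsP [[a' b'] /= [a'g b'h ->]].
by apply: morder_add; [apply: ga.2 | apply: hb.2].
Qed.

Lemma is_lead_mon_mpolyX a : is_lead_mon le ('X_[a] : S) a.
Proof.
by split=> [|c]; rewrite msuppX mem_seq1 // => /eqP ->; apply: morder_refl.
Qed.

Lemma is_lead_monXn (g : S) a k : is_lead_mon le g a -> is_lead_mon le (g ^+ k) (a *+ k)%MM.
Proof.
move=> ga; elim: k => [|k IHk]; last by rewrite exprS mulmS; apply: is_lead_monM.
by rewrite expr0 mulm0n -mpolyX0; apply: is_lead_mon_mpolyX.
Qed.

Lemma is_lead_mon_complement k (f : S) m : is_lead_mon le f m -> squarefree_mon m ->
  is_lead_mon le (f ^+ k * 'X_[(mnm_ones n - m) *+ k]) (mnm_ones n *+ k)%MM.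
Proof.
move=> fm m_sq; have -> : (mnm_ones n *+ k = m *+ k + (mnm_ones n - m) *+ k)%MM.
  by apply/mnmP => i; rewrite mnmDE !mulmnE mnmBE mnmE; have := m_sq i; nia.
exact/is_lead_monM/is_lead_mon_mpolyX/is_lead_monXn.
Qed.

End MonomialOrder.

Section Ideals.
Variables (n : nat) (K : fieldType).
Local Notation S := {mpoly K[n]}.
Implicit Types (A : S -> Prop) (I J : S -> Prop).

Lemma ideal_gen_is_ideal A : is_ideal (ideal_gen A).
Proof.
split; first by exists [::]; rewrite big_nil.
  move=> _ _ [s [sA ->]] [t [tA ->]]; exists (s ++ t); rewrite big_cat.
  by split=> // c; rewrite mem_cat => /orP[/sA|/tA].
move=> r _ [s [sA ->]]; exists [seq (r * c.1, c.2) | c <- s]; split.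
  by move=> c /mapP [c' /sA ? ->].
by rewrite big_map mulr_sumr; apply: eq_bigr => c _; rewrite mulrA.
Qed.

Lemma ideal_gen_base A x : A x -> ideal_gen A x.
Proof.
by move=> Ax; exists [:: (1, x)]; rewrite big_seq1 mul1r; split=> // c /[!inE] /eqP ->.
Qed.

Lemma ideal_gen_min A I : is_ideal I -> (forall x, A x -> I x) ->
  forall x, ideal_gen A x -> I x.
Proof.
case=> I0 ID IM AI _ [s [sA ->]]; elim: s sA => [|c s IHs] sA; rewrite ?big_nil //.
rewrite big_cons; apply: ID; first by apply/IM/AI/sA; rewrite mem_head.
by apply: IHs => c' c's; apply: sA; rewrite inE c's orbT.
Qed.

Lemma is_ideal_ext I J : (forall g, I g <-> J g) -> is_ideal J -> is_ideal I.
Proof.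
move=> IJ [J0 JD JM]; split; first exact/IJ.
  by move=> a b /IJ Ja /IJ Jb; apply/IJ/JD.
by move=> r a /IJ Ja; apply/IJ/JM.
Qed.

Lemma is_ideal_colon I J : is_ideal I -> is_ideal (colon I J).
Proof.
case=> I0 ID IM; split=> [h _|a b Ia Ib h Jh|r a Ia h Jh]; first by rewrite mul0r.
  by rewrite mulrDl; apply: ID; [apply: Ia | apply: Ib].
by rewrite -mulrA; apply/IM/Ia.
Qed.

Lemma is_ideal_sum I J : is_ideal I -> is_ideal J -> is_ideal (ideal_sum I J).
Proof.
case=> I0 ID IM [J0 JD JM]; split; first by exists 0, 0; rewrite addr0.
  move=> _ _ [a1 [a2 [Ia1 Ja2 ->]]] [b1 [b2 [Ib1 Jb2 ->]]].
  by exists (a1 + b1), (a2 + b2); rewrite addrACA; split; [apply: ID | apply: JD |].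
move=> r _ [a1 [a2 [Ia1 Ja2 ->]]].
by exists (r * a1), (r * a2); rewrite mulrDr; split; [apply: IM | apply: JM |].
Qed.

Lemma is_ideal_cap I J : is_ideal I -> is_ideal J -> is_ideal (ideal_cap I J).
Proof.
case=> I0 ID IM [J0 JD JM]; split=> // [a b [Ia Ja] [Ib Jb]|r a [Ia Ja]].
  by split; [apply: ID | apply: JD].
by split; [apply: IM | apply: JM].
Qed.

Lemma principal_dvd (f g : S) : principal f g -> exists q, g = q * f.
Proof.
case=> s [sf ->]; exists (\sum_(c <- s) c.1); rewrite mulr_suml big_seq [RHS]big_seq.
by apply: eq_bigr => c cs; rewrite (sf c cs).
Qed.

Lemma Cf_is_ideal (f : S) I : Cf f I -> is_ideal I.
Proof.
elim=> {I} [I IE | I J L _ idI _ LE | I J L _ idI _ idJ LE | I J L _ idI _ idJ LE];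
  apply: is_ideal_ext; do ?[exact: LE | exact: IE].
- exact: ideal_gen_is_ideal.
- exact: is_ideal_colon.
- exact: is_ideal_sum.
- exact: is_ideal_cap.
Qed.

End Ideals.

Section Cartier.
Variables (n : nat) (K : fieldType) (p : nat).
Hypothesis charK : p \in [pchar K].
Local Notation S := {mpoly K[n]}.

Definition cartier_mnm (d : 'X_{1..n}) : 'X_{1..n} := (d *+ p + mnm_ones n *+ p.-1)%MM.

Definition cartier_admissible (e : 'X_{1..n}) : bool := [forall i, e i %% p == p.-1]%N.

Definition mnm_divp (e : 'X_{1..n}) : 'X_{1..n} := [multinom (e i %/ p)%N | i < n].

Definition cartier (h : S) : S :=
  \sum_(e <- msupp h | cartier_admissible e) h@_e *: 'X_[mnm_divp e].

Lemma cartier_mnmE d i : cartier_mnm d i = (d i * p + p.-1)%N.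
Proof. by rewrite mnmDE !mulmnE mnmE mul1n. Qed.

Lemma cartier_mnm_inj : injective cartier_mnm.
Proof.
move=> c d /(congr1 (fun e : 'X_{1..n} => e _)) cd; apply/mnmP => i.
move: (cd i); rewrite !cartier_mnmE => /addIn /eqP.
by rewrite eqn_pmul2r ?(pchar_gt0 charK) // => /eqP.
Qed.

Lemma cartier_mnm_eq d e : (cartier_mnm d == e) = cartier_admissible e && (mnm_divp e == d).
Proof.
have p_gt0 := pchar_gt0 charK; apply/eqP/andP => [<- | [/forallP e_adm /eqP <-]].
  split; first by apply/forallP => i; rewrite cartier_mnmE modnMDl modn_small //; lia.
  by apply/eqP/mnmP => i; rewrite mnmE cartier_mnmE divnMDl // divn_small ?addn0 //; lia.
by apply/mnmP => i; rewrite cartier_mnmE mnmE -(eqP (e_adm i)) -divn_eq.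
Qed.

Lemma mcoeff_cartier h d : (cartier h)@_d = h@_(cartier_mnm d).
Proof.
rewrite {2}(mpolyE h) !(raddf_sum (mcoeff _)) big_mkcond; apply: eq_bigr => e _ /=.
rewrite !mcoeffZ !mcoeffX [e == _]eq_sym cartier_mnm_eq.
by case: cartier_admissible; rewrite ?mulr0.
Qed.

Lemma cartierD : {morph cartier : g h / g + h}.
Proof. by move=> g h; apply/mpolyP => d; rewrite mcoeffD !mcoeff_cartier mcoeffD. Qed.

Lemma cartierZ c h : cartier (c *: h) = c *: cartier h.
Proof. by apply/mpolyP => d; rewrite mcoeffZ !mcoeff_cartier mcoeffZ. Qed.

Lemma cartier0 : cartier 0 = 0.
Proof. by apply/mpolyP => d; rewrite mcoeff_cartier !mcoeff0. Qed.

Lemma cartierXp b g : cartier ('X_[b *+ p] * g) = 'X_[b] * cartier g.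
Proof.
have p_gt0 := pchar_gt0 charK; apply/mpolyP => d.
rewrite mcoeff_cartier !mcoeffXM mcoeff_cartier.
have -> : ((b *+ p)%MM <= cartier_mnm d)%MM = (b <= d)%MM.
  apply/mnm_lepP/mnm_lepP => bd i; have := bd i; rewrite mulmnE cartier_mnmE; nia.
case: ifP => // /mnm_lepP bd; congr (g@_ _); apply/mnmP => i.
by rewrite mnmBE !cartier_mnmE mnmBE mulmnE mulnBl; have := bd i; nia.
Qed.

Definition mfrob : S -> S := map_mpoly (pFrobenius_aut charK).
HB.instance Definition _ := GRing.RMorphism.on mfrob.

Lemma mcoeff_mfrob a m : (mfrob a)@_m = a@_m ^+ p.
Proof. by rewrite mcoeff_map_mpoly. Qed.

Lemma mfrobX m : mfrob 'X_[m] = 'X_[m].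
Proof. exact: map_mpolyX. Qed.

Lemma mfrobZ c a : mfrob (c *: a) = c ^+ p *: mfrob a.
Proof. exact: map_mpolyZ. Qed.

Lemma exprp_mpoly (a : S) : a ^+ p = \sum_(b <- msupp a) a@_b ^+ p *: 'X_[b *+ p].
Proof.
have charS : p \in [pchar S].
  by rewrite inE (pcharf_prime charK) /= -mpolyC_nat (pcharf0 charK).
rewrite {1}(mpolyE a) -(pFrobenius_autE charS) rmorph_sum; apply: eq_bigr => b _.
by rewrite /= pFrobenius_autE exprZn mpolyXn.
Qed.

Lemma cartier_frob (a g : S) : cartier (a ^+ p * g) = mfrob a * cartier g.
Proof.
rewrite exprp_mpoly [in mfrob a](mpolyE a) rmorph_sum !mulr_suml.
rewrite (big_morph _ cartierD cartier0).
by apply: eq_bigr => b _ /=; rewrite -!scalerAl cartierZ cartierXp mfrobZ mfrobX scalerAl.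
Qed.

End Cartier.

Section FrobeniusSpan.
Variables (K : fieldType) (p : nat).
Hypothesis charK : p \in [pchar K].
Implicit Types (e : seq K) (a : nat -> K).

(* [frob_comb e a] is a K^p-linear combination of [e]: [frob_free] and
   [frob_span] are linear independence and span over the subfield K^p. *)
Definition frob_comb e a : K := \sum_(0 <= i < size e) e`_i * a i ^+ p.

Definition frob_free e : Prop :=
  forall a, frob_comb e a = 0 -> forall i, (i < size e)%N -> a i = 0.

Definition frob_span e (x : K) : Prop := exists a, x = frob_comb e a.

Lemma expr0p : (0 : K) ^+ p = 0.
Proof. by rewrite expr0n eqn0Ngt (pchar_gt0 charK). Qed.

Lemma frob_comb_pad e e' a :
  frob_comb (e ++ e') (fun i => if (i < size e)%N then a i else 0) = frob_comb e a.
Proof.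
rewrite /frob_comb size_cat (@big_cat_nat _ _ _ (size e)) ?leq_addr //=.
rewrite [X in _ + X = _]big_nat [X in _ + X = _]big1 ?addr0 => [|i /andP[ei _]]; last first.
  by rewrite ltnNge ei expr0p mulr0.
by rewrite !big_nat; apply: eq_bigr => i /andP[_ ie]; rewrite nth_cat ie.
Qed.

Lemma frob_span_cat e e' x : frob_span e x -> frob_span (e ++ e') x.
Proof.
by case=> a ->; exists (fun i => if (i < size e)%N then a i else 0); rewrite frob_comb_pad.
Qed.

Lemma frob_comb_rcons e k a : frob_comb (rcons e k) a = frob_comb e a + k * a (size e) ^+ p.
Proof.
rewrite /frob_comb size_rcons big_nat_recr //= nth_rcons ltnn eqxx; congr (_ + _).
by rewrite !big_nat; apply: eq_bigr => i /andP[_ ie]; rewrite nth_rcons ie.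
Qed.

Lemma frob_span_rcons e k : frob_span (rcons e k) k.
Proof.
exists (fun i => (i == size e)%:R); rewrite frob_comb_rcons eqxx expr1n mulr1.
rewrite /frob_comb big_nat big1 ?add0r // => i /andP[_ ie].
by rewrite (ltn_eqF ie) expr0p mulr0.
Qed.

Lemma frob_free_rcons e k : frob_free e -> ~ frob_span e k -> frob_free (rcons e k).
Proof.
move=> e_free k_span a; rewrite frob_comb_rcons => comb0.
have ak0 : a (size e) = 0.
  apply/eqP/negP => /negP ak_neq0; apply: k_span.
  exists (fun i => - a i / a (size e)).
  have akp_neq0 : a (size e) ^+ p != 0 by rewrite expf_neq0.
  apply: (mulIf akp_neq0); rewrite /frob_comb big_distrl /=.
  have -> : k * a (size e) ^+ p = - frob_comb e a.
    by apply/eqP; rewrite -addr_eq0 addrC comb0.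
  rewrite -sumrN; apply: eq_bigr => i _.
  rewrite -!(pFrobenius_autE charK) rmorphM /= fmorphV rmorphN /=.
  by rewrite -mulrA mulrAC -mulrA mulfV // mulr1 mulrN.
move: comb0; rewrite ak0 expr0p mulr0 addr0 => comb0 i; rewrite size_rcons ltnS leq_eqVlt.
by case/orP => [/eqP -> // | ie]; apply: e_free.
Qed.

Lemma frob_free_nil : frob_free [::].
Proof. by []. Qed.

Lemma frob_free_extend e (ks : seq K) : frob_free e ->
  exists e', frob_free (e ++ e') /\ forall k, k \in ks -> frob_span (e ++ e') k.
Proof.
elim: ks e => [|k ks IHks] e e_free; first by exists [::]; rewrite cats0.
have [k_span | k_nspan] := classic (frob_span e k).
  have [e' [ee'_free ks_span]] := IHks e e_free; exists e'; split=> // x /[!inE].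
  by case/orP => [/eqP -> | /ks_span //]; apply: frob_span_cat.
have [e' [ee'_free ks_span]] := IHks _ (frob_free_rcons e_free k_nspan).
exists (k :: e'); rewrite -cat_rcons; split=> // x /[!inE].
by case/orP => [/eqP -> | /ks_span //]; apply/frob_span_cat/frob_span_rcons.
Qed.

End FrobeniusSpan.

Section FrobeniusIdeal.
Variables (n : nat) (K : fieldType) (p : nat).
Hypothesis charK : p \in [pchar K].
Local Notation S := {mpoly K[n]}.
Local Notation mfrob := (@mfrob n K p charK).
Local Notation frob_comb := (frob_comb p).
Local Notation frob_free := (frob_free p).
Local Notation frob_span := (frob_span p).
Local Notation frob_free_nil := (@frob_free_nil K p).
Implicit Types (I J L : S -> Prop) (e : seq K) (W : nat -> S).

Definition frob_ideal I : S -> Prop := ideal_gen (fun x : S => exists2 h, I h & x = mfrob h).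

Lemma frob_ideal_is_ideal I : is_ideal (frob_ideal I).
Proof. exact: ideal_gen_is_ideal. Qed.

Definition mfrob_comb e W : S := \sum_(0 <= i < size e) e`_i *: mfrob (W i).

Lemma mcoeff_mfrob_comb e W d : (mfrob_comb e W)@_d = frob_comb e (fun i => (W i)@_d).
Proof.
by rewrite (raddf_sum (mcoeff d)); apply: eq_bigr => i _; rewrite /= mcoeffZ mcoeff_mfrob.
Qed.

Lemma mfrob_comb_inj e W W' : frob_free e -> mfrob_comb e W = mfrob_comb e W' ->
  forall i, (i < size e)%N -> W i = W' i.
Proof.
move=> e_free WW' i ie; apply/mpolyP => d; apply/eqP; rewrite -subr_eq0; apply/eqP.
move: i ie; apply: e_free.
have -> : frob_comb e (fun i => (W i)@_d - (W' i)@_d) =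
          (mfrob_comb e W)@_d - (mfrob_comb e W')@_d.
  rewrite !mcoeff_mfrob_comb -sumrB; apply: eq_bigr => i _.
  by rewrite -!(pFrobenius_autE charK) rmorphB /= mulrBr.
by rewrite WW' subrr.
Qed.

Lemma mfrob_comb_pad e e' W :
  mfrob_comb (e ++ e') (fun i => if (i < size e)%N then W i else 0) = mfrob_comb e W.
Proof.
apply/mpolyP => d; rewrite !mcoeff_mfrob_comb -[RHS](frob_comb_pad charK _ e').
by rewrite /frob_comb; apply: eq_bigr => i _; case: ifP; rewrite ?mcoeff0.
Qed.

Lemma mfrob_combMr e W j : mfrob_comb e W * mfrob j = mfrob_comb e (fun i => W i * j).
Proof. by rewrite mulr_suml; apply: eq_bigr => i _; rewrite -scalerAl rmorphM. Qed.

Lemma frob_ideal_mono I J :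
  (forall g, I g -> J g) -> forall z, frob_ideal I z -> frob_ideal J z.
Proof.
move=> IJ; apply: ideal_gen_min; first exact: frob_ideal_is_ideal.
by move=> _ [g Ig ->]; apply: ideal_gen_base; exists g; first exact: IJ.
Qed.

Lemma frob_ideal_mfrob_comb L e W : (forall i, (i < size e)%N -> L (W i)) ->
  frob_ideal L (mfrob_comb e W).
Proof.
move=> LW; exists [seq ((e`_i)%:MP, mfrob (W i)) | i <- index_iota 0 (size e)]; split.
  by move=> _ /mapP [i /[!mem_index_iota] ie ->]; exists (W i); first exact: LW.
by rewrite big_map; apply: eq_bigr => i _; rewrite mul_mpolyC.
Qed.

Lemma frob_ideal_lincomb I z : is_ideal I -> frob_ideal I z ->
  exists2 s : seq (K * S), (forall t, t \in s -> I t.2) &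
    z = \sum_(t <- s) t.1 *: mfrob t.2.
Proof.
move=> [I0 ID IM] [s [sI ->]]; elim: s sI => [|[a x] s IHs] sI.
  by exists [::]; rewrite ?big_nil.
have [h Ih /= ->] := sI _ (mem_head _ _).
have sub : {subset s <= (a, x) :: s} := @mem_behead _ (_ :: s).
have [s' s'I s'E] := IHs (fun c cs => sI c (sub c cs)).
exists ([seq (a@_b, 'X_[b] * h) | b <- msupp a] ++ s').
  by move=> t /[!mem_cat] /orP[/mapP [b _ ->] | /s'I //]; apply: IM.
rewrite big_cat big_cons s'E big_map /= {1}(mpolyE a) mulr_suml; congr (_ + _).
by apply: eq_bigr => b _; rewrite rmorphM /= mfrobX scalerAl.
Qed.

Lemma frob_lincomb_span I E (s : seq (K * S)) : is_ideal I ->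
  (forall t, t \in s -> I t.2) -> (forall t, t \in s -> frob_span E t.1) ->
  exists2 W, (forall i, I (W i)) & \sum_(t <- s) t.1 *: mfrob t.2 = mfrob_comb E W.
Proof.
move=> [I0 ID IM]; elim: s => [|[c x] s IHs] sI s_span.
  exists (fun=> 0) => //; rewrite big_nil /mfrob_comb big1 // => i _.
  by rewrite rmorph0 scaler0.
have sub : {subset s <= (c, x) :: s} := @mem_behead _ (_ :: s).
have [W WI sW] := IHs (fun t ts => sI t (sub t ts)) (fun t ts => s_span t (sub t ts)).
have [a /= cE] := s_span _ (mem_head _ _); have /= Ix := sI _ (mem_head _ _).
exists (fun i => a i *: x + W i) => [i|]; first by rewrite -mul_mpolyC; apply/ID/WI/IM.
rewrite big_cons sW /= cE /frob_comb /mfrob_comb scaler_suml -big_split /=.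
apply: eq_bigr => i _.
by rewrite rmorphD /= mfrobZ scalerDr scalerA.
Qed.

Lemma frob_ideal_decomp I z e : is_ideal I -> frob_ideal I z -> frob_free e ->
  exists e', frob_free (e ++ e') /\
    exists2 W, (forall i, I (W i)) & z = mfrob_comb (e ++ e') W.
Proof.
move=> idI Iz e_free; have [s sI ->] := frob_ideal_lincomb idI Iz.
have [e' [ee'_free s_span]] := frob_free_extend charK (map fst s) e_free.
exists e'; split=> //; apply: frob_lincomb_span => // t ts.
exact/s_span/map_f.
Qed.

Lemma frob_ideal_lead le I z c : is_ideal I -> frob_ideal I z ->
  is_lead_mon le z c -> exists2 h, I h & is_lead_mon le h c.
Proof.
move=> idI Iz [zc z_le].
(* Over a K^p-free family the components of z are supported in msupp z, and
   one of them has c in its support. *)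
have [E [E_free [W WI zE]]] := frob_ideal_decomp idI Iz frob_free_nil.
have W_supp i b : (i < size E)%N -> b \in msupp (W i) -> b \in msupp z.
  move=> iE; rewrite !mcoeff_msupp; apply: contra => /eqP zb0.
  by apply/eqP; move: i iE; apply: E_free; rewrite -mcoeff_mfrob_comb -zE.
have [[i iE Wic] | Wc0] := classic (exists2 i, (i < size E)%N & (W i)@_c != 0).
  exists (W i) => //; split=> [|b /(W_supp i) b_supp]; first by rewrite mcoeff_msupp.
  exact/z_le/b_supp.
move: zc; rewrite mcoeff_msupp zE mcoeff_mfrob_comb /frob_comb big_nat big1 ?eqxx //.
move=> i /andP[_ iE]; have [->|Wic] := eqVneq (W i)@_c 0; first by rewrite expr0p ?mulr0.
by case: Wc0; exists i.
Qed.

Lemma frob_ideal_cap I J z : is_ideal I -> is_ideal J ->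
  frob_ideal I z -> frob_ideal J z -> frob_ideal (ideal_cap I J) z.
Proof.
move=> idI idJ Iz Jz.
(* Decompose z along I over a K^p-free family e, then along J over an extension
   of e; by uniqueness the two decompositions coincide. *)
have [e [e_free [W WI zE]]] := frob_ideal_decomp idI Iz frob_free_nil.
have [e' [ee'_free [W' W'J zE']]] := frob_ideal_decomp idJ Jz e_free.
have W'E := mfrob_comb_inj ee'_free
  (etrans (esym zE') (etrans zE (esym (mfrob_comb_pad e e' W)))).
rewrite zE'; apply: frob_ideal_mfrob_comb => i ie; split; last exact: W'J.
by rewrite W'E //; case: ifP => _; [apply: WI | case: idI].
Qed.

Lemma frob_ideal_colon I J z : is_ideal I ->
  (forall j, J j -> frob_ideal I (z * mfrob j)) -> frob_ideal (colon I J) z.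
Proof.
move=> idI zJ.
(* Decompose z over a K^p-free family E with arbitrary components Y; for j in J,
   uniqueness identifies Y i * j with the components of z * mfrob j along I. *)
have idT : is_ideal (fun _ : S => True) by [].
have Tz : frob_ideal (fun=> True) z.
  have [_ _ TM] := frob_ideal_is_ideal (fun=> True).
  by rewrite -[z]mulr1 -(rmorph1 mfrob); apply/TM/ideal_gen_base; exists 1.
have [E [E_free [Y _ zE]]] := frob_ideal_decomp idT Tz frob_free_nil.
rewrite zE; apply: frob_ideal_mfrob_comb => i iE j Jj.
have := zJ j Jj; rewrite zE mfrob_combMr => Izj.
have [e' [Ee'_free [W WI zjE]]] := frob_ideal_decomp idI Izj E_free.
have := mfrob_comb_inj Ee'_free (etrans (esym zjE) (esym (mfrob_comb_pad E e' _))).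
by rewrite size_cat => /(_ i (ltn_addr _ iE)); rewrite iE => <-.
Qed.

End FrobeniusIdeal.

Section CartierStable.
Variables (n : nat) (K : fieldType) (p : nat).
Hypothesis charK : p \in [pchar K].
Local Notation S := {mpoly K[n]}.
Local Notation cartier := (@cartier n K p).
Local Notation mfrob := (@mfrob n K p charK).
Local Notation frob_ideal := (@frob_ideal n K p charK).
Implicit Types (u : S) (I J : S -> Prop).

Definition cartier_stable u I : Prop := forall g, I g -> frob_ideal I (cartier (u * g)).

Lemma cartier_stable_ext u I J :
  (forall g, I g <-> J g) -> cartier_stable u J -> cartier_stable u I.
Proof. by move=> IJ stJ g /IJ /stJ; apply: frob_ideal_mono => h /IJ. Qed.

Lemma cartier_stable_principal (f v : S) : cartier_stable (f ^+ p.-1 * v) (principal f).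
Proof.
move=> _ /principal_dvd [q ->].
have fp : f ^+ p = f ^+ p.-1 * f by rewrite -exprSr prednK ?(pchar_gt0 charK).
have -> : f ^+ p.-1 * v * (q * f) = f ^+ p * (v * q) by rewrite fp; ring.
have [_ _ FM] := frob_ideal_is_ideal charK (principal f).
by rewrite cartier_frob mulrC; apply/FM/ideal_gen_base; exists f => //; apply: ideal_gen_base.
Qed.

Lemma cartier_stable_colon u I J : is_ideal I -> is_ideal J ->
  cartier_stable u I -> cartier_stable u (colon I J).
Proof.
move=> idI [_ _ JM] stI g Ig; apply: frob_ideal_colon => // j Jj.
have Jjp : J (j ^+ p) by rewrite -(prednK (pchar_gt0 charK)) exprSr; apply: JM.
have := stI _ (Ig _ Jjp).
by rewrite mulrA mulrC cartier_frob mulrC.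
Qed.

Lemma cartier_stable_sum u I J : is_ideal I -> is_ideal J ->
  cartier_stable u I -> cartier_stable u J -> cartier_stable u (ideal_sum I J).
Proof.
move=> [I0 _ _] [J0 _ _] stI stJ _ [a [b [Ia Jb ->]]].
have [_ FD _] := frob_ideal_is_ideal charK (ideal_sum I J).
rewrite mulrDr (cartierD charK); apply: FD.
  by apply: (frob_ideal_mono _ (stI _ Ia)) => x Ix; exists x, 0; rewrite addr0.
by apply: (frob_ideal_mono _ (stJ _ Jb)) => x Jx; exists 0, x; rewrite add0r.
Qed.

Lemma cartier_stable_cap u I J : is_ideal I -> is_ideal J ->
  cartier_stable u I -> cartier_stable u J -> cartier_stable u (ideal_cap I J).
Proof. by move=> idI idJ stI stJ g [Ig Jg]; apply: frob_ideal_cap (stI _ Ig) (stJ _ Jg). Qed.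

Lemma Cf_cartier_stable (f v : S) I : Cf f I -> cartier_stable (f ^+ p.-1 * v) I.
Proof.
elim=> {I} [I IE | I J L CfI stI idJ LE | I J L CfI stI CfJ stJ LE | I J L CfI stI CfJ stJ LE].
- exact/(cartier_stable_ext IE)/cartier_stable_principal.
- exact: cartier_stable_ext LE (cartier_stable_colon (Cf_is_ideal CfI) idJ stI).
- exact: cartier_stable_ext LE
    (cartier_stable_sum (Cf_is_ideal CfI) (Cf_is_ideal CfJ) stI stJ).
- exact: cartier_stable_ext LE
    (cartier_stable_cap (Cf_is_ideal CfI) (Cf_is_ideal CfJ) stI stJ).
Qed.

End CartierStable.

Section Descent.
Variables (n : nat) (K : fieldType) (p : nat).
Hypothesis charK : p \in [pchar K].
Variable le : rel 'X_{1..n}.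
Hypothesis le_mo : monomial_order le.
Local Notation S := {mpoly K[n]}.
Local Notation cartier := (@cartier n K p).

Lemma is_lead_mon_cartier (h : S) c :
  is_lead_mon le h (cartier_mnm p c) -> is_lead_mon le (cartier h) c.
Proof.
move=> [hc h_le]; split; first by rewrite mcoeff_msupp (mcoeff_cartier charK) -mcoeff_msupp.
move=> d; rewrite mcoeff_msupp (mcoeff_cartier charK) -mcoeff_msupp => /h_le dc.
have [//|cd] := orP (morder_total le_mo d c).
have cdE : le (cartier_mnm p c) (cartier_mnm p d).
  exact/(morder_addr le_mo)/(morder_muln le_mo).
by rewrite (cartier_mnm_inj charK (morder_anti le_mo dc cdE)) morder_refl.
Qed.

Definition mnm_ceil_divp (b : 'X_{1..n}) : 'X_{1..n} :=
  [multinom ((b i + p.-1) %/ p)%N | i < n].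

Variables (u : S) (I : S -> Prop).
Hypotheses (lead_u : is_lead_mon le u (mnm_ones n *+ p.-1)%MM)
  (idI : is_ideal I) (stI : cartier_stable charK u I).

Lemma is_lead_mon_ceil_divp g b : I g -> is_lead_mon le g b ->
  exists2 h, I h & is_lead_mon le h (mnm_ceil_divp b).
Proof.
move=> Ig gb; set c := mnm_ceil_divp b.
have bc : (b <= c *+ p)%MM.
  apply/mnm_lepP => i; rewrite mulmnE mnmE.
  by case: (ceil_div_bounds (b i) (prime_gt1 (pcharf_prime charK))).
have Ig' : I ('X_[c *+ p - b] * g) by case: idI => _ _; apply.
apply: (frob_ideal_lead idI (stI Ig')); apply: is_lead_mon_cartier.
have -> : cartier_mnm p c = (mnm_ones n *+ p.-1 + ((c *+ p - b) + b))%MM.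
  by rewrite submK // addmC.
apply: (is_lead_monM le_mo lead_u); apply: (is_lead_monM le_mo _ gb).
exact: is_lead_mon_mpolyX.
Qed.

Lemma is_lead_mon_rad g b : I g -> is_lead_mon le g b ->
  exists2 h, I h & is_lead_mon le h (mnm_rad b).
Proof.
have p_gt1 := prime_gt1 (pcharf_prime charK).
have [k] := ubnP (mdeg b); elim: k b g => // k IHk b g /ltnSE b_le Ig gb.
have [/forallP b_sq | /forallPn [i]] := boolP [forall i, b i <= 1]%N.
  have -> : mnm_rad b = b.
    by apply/mnmP => i; rewrite mnmE; have := b_sq i; case: (b i) => [|[]].
  by exists g.
rewrite -ltnNge => bi_gt1.
have [h Ih hc] := is_lead_mon_ceil_divp Ig gb.
have -> : mnm_rad b = mnm_rad (mnm_ceil_divp b).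
  by apply/mnmP => j; rewrite !mnmE; case: (ceil_div_bounds (b j) p_gt1).
apply: (IHk _ h) => //; apply: leq_trans b_le; apply: (lem_mdeg_lt (i := i)).
  by apply/mnm_lepP => j; rewrite mnmE; case: (ceil_div_bounds (b j) p_gt1).
by rewrite mnmE; case: (ceil_div_bounds (b i) p_gt1) => _ _ ->.
Qed.

End Descent.

Theorem proposition2p1 (K : fieldType) (p : nat) (hp : p \in [pchar K])
  (n : nat) (le : rel 'X_{1..n}) (hle : monomial_order le)
  (f : {mpoly K[n]}) (m : 'X_{1..n})
  (hm : is_lead_mon le f m) (hsq : squarefree_mon m)
  (I : {mpoly K[n]} -> Prop) (hI : Cf f I) :
  gen_by_squarefree_monomials (initial_ideal le I).
Proof.
have lead_u := is_lead_mon_complement hle p.-1 hm hsq.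
have stI := Cf_cartier_stable hp 'X_[(mnm_ones n - m) *+ p.-1] hI.
have idI := Cf_is_ideal hI.
pose G s := squarefree_mon s /\ exists2 g, I g & is_lead_mon le g s.
have [_ _ genM] := ideal_gen_is_ideal (fun x : {mpoly K[n]} => exists s, G s /\ x = 'X_[s]).
exists G; split=> [s [] // | g]; split.
- apply: (ideal_gen_min (ideal_gen_is_ideal _)) => _ [g' [b [Ig gb ->]]].
  have [h Ih hr] := is_lead_mon_rad hle lead_u idI stI Ig gb.
  rewrite -(submK (mnm_rad_le b)) mpolyXD; apply/genM/ideal_gen_base.
  by exists (mnm_rad b); split=> //; split; [exact: mnm_rad_squarefree | exists h].
- apply: (ideal_gen_min (ideal_gen_is_ideal _)) => _ [s [[_ [g' Ig gs]] ->]].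
  by apply: ideal_gen_base; exists g', s.
Qed.
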